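(* Let $0<\gamma<1$, $p\ge2$ an integer, and $$\beta_{\gamma,p}:=\min\left\{\frac{1-\gamma}{2p}\log\Bigl(\frac{2p}{p+1}\Bigr),\ \frac{1-\gamma}{8\,p^\gamma(p-1)^{1-\gamma}}\right\}.$$ Then for every $j\ge p$, $$(c_\gamma^{(p)})_j\le (c_\gamma)_p\,(1-\beta_{\gamma,p})^{j-p},$$ and moreover $\frac{1-\gamma}{8p}\le\beta_{\gamma,p}\le\frac{1-\gamma}{4p}$.
   Context: $\log$ is the natural logarithm. $(c_\gamma)_j$ is defined by $(1-x)^{-\gamma}=\sum_{j\ge0}(c_\gamma)_jx^j$; $(\tilde c_\gamma)_k$ by $(1-x)^{\gamma}=\sum_{k\ge0}(\tilde c_\gamma)_kx^k$ ($|x|<1$). The sequence $(c_\gamma^{(p)})_j$ is defined by $(c_\gamma^{(p)})_0=1$ and $(c_\gamma^{(p)})_j=-\sum_{k=1}^{\min\{p-1,j\}}(\tilde c_\gamma)_k(c_\gamma^{(p)})_{j-k}$ for $j\ge1$; its first $n$ terms are the subdiagonal entries of the lower-triangular Toeplitz matrix $C_\gamma^{(p)}$, the inverse of the $n\times n$ lower-triangular Toeplitz matrix with $r$-th subdiagonal $(\tilde c_\gamma)_r$ for $r\le p-1$ and $0$ otherwise. *)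

From Stdlib Require Import Reals List Lra Lia.
Import ListNotations.
Open Scope R_scope.

Fixpoint gbinom (a : R) (k : nat) : R :=
  match k with
  | O => 1
  | S k' => gbinom a k' * (a - INR k') / INR (S k')
  end.

(* (1-x)^{-g} = sum_j (c_g)_j x^j  (binomial series): (c_g)_j = (-1)^j binom(-g, j) *)
Definition c_gam (g : R) (j : nat) : R := (-1) ^ j * gbinom (- g) j.

(* (1-x)^{g} = sum_k (ct_g)_k x^k : (ct_g)_k = (-1)^k binom(g, k) *)
Definition ct_gam (g : R) (k : nat) : R := (-1) ^ k * gbinom g k.

Fixpoint cp_list (g : R) (p : nat) (n : nat) : list R :=
  match n with
  | O => [1]
  | S n' =>
      let l := cp_list g p n' in
      l ++ [ - fold_right Rplus 0
               (map (fun k => ct_gam g k * nth (S n' - k) l 0)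
                    (seq 1 (Nat.min (p - 1) (S n')))) ]
  end.

Definition cp_gam (g : R) (p : nat) (j : nat) : R := nth j (cp_list g p j) 0.

Definition beta_gp (g : R) (p : nat) : R :=
  Rmin ((1 - g) / (2 * INR p) * ln (2 * INR p / (INR p + 1)))
       ((1 - g) / (8 * Rpower (INR p) g * Rpower (INR p - 1) (1 - g))).

(* Up to index p-1 the truncated recursion coincides with the convolution identity
   (1-x)^g (1-x)^(-g) = 1, so (c^(p))_j = (c_g)_j for j < p, and (c^(p))_p = (c_g)_p + (ct_g)_p
   with (ct_g)_p < 0.  The ratios (c_g)_(k+1) / (c_g)_k = (k+g)/(k+1) are at most
   r = 1 - (1-g)/p for k < p, and for j > p the term (c^(p))_j is a combination of the p-1
   previous terms with the positive weights -(ct_g)_k, so the one-step decay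
   (c^(p))_(j+1) <= r (c^(p))_j propagates by strong induction.  Finally
   beta <= (1-g)/(4p) <= 1 - r, so the rate 1 - beta is slower than r. *)

From Stdlib Require Import Reals Lra Lia List Wf_nat.
Open Scope R_scope.

Lemma length_cp_list g p n : length (cp_list g p n) = S n.
Proof. induction n as [|n IH]; simpl; [reflexivity|]. rewrite length_app, IH; simpl; lia. Qed.

Lemma nth_cp_list g p n i : (i <= n)%nat -> nth i (cp_list g p n) 0 = cp_gam g p i.
Proof.
  induction n as [|n IH]; intros Hi.
  - replace i with 0%nat by lia; reflexivity.
  - destruct (Nat.eq_dec i (S n)) as [->|Hne]; [reflexivity|].
    simpl cp_list. rewrite app_nth1 by (rewrite length_cp_list; lia). apply IH; lia.
Qed.

Lemma fold_right_map_seq (f : nat -> R) s m :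
  fold_right Rplus 0 (map f (seq s (S m))) = sum_f_R0 (fun i => f (s + i)%nat) m.
Proof.
  revert s; induction m as [|m IH]; intros s.
  - simpl. rewrite Nat.add_0_r; ring.
  - change (seq s (S (S m))) with (s :: seq (S s) (S m)).
    rewrite map_cons; cbn [fold_right]. rewrite IH, (decomp_sum _ (S m)) by lia.
    simpl pred. rewrite Nat.add_0_r. f_equal. apply sum_eq; intros i _; f_equal; lia.
Qed.

Lemma cp_gam_rec g p j : (2 <= p)%nat -> (1 <= j)%nat ->
  cp_gam g p j =
  - sum_f_R0 (fun i => ct_gam g (S i) * cp_gam g p (j - S i)) (Nat.min (p - 1) j - 1).
Proof.
  intros Hp Hj. destruct j as [|n]; [lia|].
  unfold cp_gam at 1; simpl cp_list.
  rewrite <- (length_cp_list g p n) at 1. rewrite nth_middle.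
  replace (Nat.min (p - 1) (S n)) with (S (Nat.min (p - 1) (S n) - 1)) at 1 by lia.
  rewrite fold_right_map_seq. f_equal. apply sum_eq; intros i Hi.
  replace (1 + i)%nat with (S i) by lia. rewrite nth_cp_list by lia. reflexivity.
Qed.

Lemma ct_gam_0 g : ct_gam g 0 = 1.
Proof. unfold ct_gam; simpl; ring. Qed.

Lemma c_gam_0 g : c_gam g 0 = 1.
Proof. unfold c_gam; simpl; ring. Qed.

Lemma ct_gam_S g k : ct_gam g (S k) = ct_gam g k * ((INR k - g) / INR (S k)).
Proof. unfold ct_gam; cbn [gbinom pow]. field. apply not_0_INR; lia. Qed.

Lemma c_gam_S g k : c_gam g (S k) = c_gam g k * ((INR k + g) / INR (S k)).
Proof. unfold c_gam; cbn [gbinom pow]. field. apply not_0_INR; lia. Qed.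

Lemma ct_gam_lt0 g k : 0 < g < 1 -> (1 <= k)%nat -> ct_gam g k < 0.
Proof.
  intros Hg Hk. induction k as [|k IH]; [lia|].
  rewrite ct_gam_S. destruct (Nat.eq_dec k 0) as [->|Hk0].
  - rewrite ct_gam_0; simpl; lra.
  - assert (H1 : 1 <= INR k) by (apply (le_INR 1); lia).
    assert (0 < (INR k - g) / INR (S k)) by (apply Rdiv_lt_0_compat; [lra|apply lt_0_INR; lia]).
    specialize (IH ltac:(lia)). nra.
Qed.

Lemma c_gam_gt0 g k : 0 < g -> 0 < c_gam g k.
Proof.
  intros Hg. induction k as [|k IH]; [rewrite c_gam_0; lra|].
  rewrite c_gam_S.
  assert (0 < (INR k + g) / INR (S k)).
  { apply Rdiv_lt_0_compat; [pose proof (pos_INR k); lra|apply lt_0_INR; lia]. }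
  nra.
Qed.

Definition conv_ct_c g n := sum_f_R0 (fun k => ct_gam g k * c_gam g (n - k)) n.

(* Both factors satisfy first-order recurrences ((1-x) f' = g f resp. -g f), and
   splitting [n+1 = k + (n+1-k)] inside the sum turns them into [n+1] conv = [n] conv. *)
Lemma conv_ct_c_succ g n : INR (S n) * conv_ct_c g (S n) = INR n * conv_ct_c g n.
Proof.
  unfold conv_ct_c.
  assert (Hsplit : INR (S n) * sum_f_R0 (fun k => ct_gam g k * c_gam g (S n - k)) (S n)
     = sum_f_R0 (fun k => INR k * ct_gam g k * c_gam g (S n - k)) (S n)
     + sum_f_R0 (fun k => INR (S n - k) * ct_gam g k * c_gam g (S n - k)) (S n)).
  { rewrite <- plus_sum, scal_sum. apply sum_eq; intros i Hi.
    rewrite minus_INR by lia. ring. }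
  assert (Hct : sum_f_R0 (fun k => INR k * ct_gam g k * c_gam g (S n - k)) (S n)
     = sum_f_R0 (fun k => (INR k - g) * ct_gam g k * c_gam g (n - k)) n).
  { rewrite decomp_sum by lia. simpl pred. simpl (INR 0).
    rewrite !Rmult_0_l, Rplus_0_l. apply sum_eq; intros i _.
    rewrite ct_gam_S. simpl (S n - S i)%nat. field. apply not_0_INR; lia. }
  assert (Hc : sum_f_R0 (fun k => INR (S n - k) * ct_gam g k * c_gam g (S n - k)) (S n)
     = sum_f_R0 (fun k => (INR n - INR k + g) * ct_gam g k * c_gam g (n - k)) n).
  { rewrite tech5, Nat.sub_diag. simpl (INR 0). rewrite !Rmult_0_l, Rplus_0_r.
    apply sum_eq; intros i Hi. replace (S n - i)%nat with (S (n - i)) by lia.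
    rewrite c_gam_S, minus_INR by lia. field. apply not_0_INR; lia. }
  rewrite Hsplit, Hct, Hc, <- plus_sum, scal_sum. apply sum_eq; intros; ring.
Qed.

Lemma conv_ct_c_S g n : conv_ct_c g (S n) = 0.
Proof.
  induction n as [|n IH].
  - pose proof (conv_ct_c_succ g 0) as H. simpl (INR 0) in H. simpl (INR 1) in H. lra.
  - pose proof (conv_ct_c_succ g (S n)) as H. rewrite IH, Rmult_0_r in H.
    apply Rmult_integral in H as [H|H]; [|exact H].
    exfalso; apply (not_0_INR (S (S n))); [lia|exact H].
Qed.

Lemma c_gam_rec g n :
  c_gam g (S n) = - sum_f_R0 (fun i => ct_gam g (S i) * c_gam g (S n - S i)) n.
Proof.
  pose proof (conv_ct_c_S g n) as H. unfold conv_ct_c in H.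
  rewrite decomp_sum in H by lia. simpl pred in H. rewrite ct_gam_0, Nat.sub_0_r in H. lra.
Qed.

Lemma cp_gam_eq_c_gam g p j : (2 <= p)%nat -> (j < p)%nat -> cp_gam g p j = c_gam g j.
Proof.
  intros Hp. induction j as [j IH] using lt_wf_ind. intros Hj.
  destruct j as [|m]; [unfold cp_gam; simpl; rewrite c_gam_0; reflexivity|].
  rewrite cp_gam_rec, c_gam_rec by lia.
  replace (Nat.min (p - 1) (S m) - 1)%nat with m by lia.
  f_equal. apply sum_eq; intros i Hi. rewrite IH by lia. reflexivity.
Qed.

Lemma cp_gam_p g p : (2 <= p)%nat -> cp_gam g p p = c_gam g p + ct_gam g p.
Proof.
  intros Hp. destruct p as [|n]; [lia|].
  rewrite cp_gam_rec, c_gam_rec by lia.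
  replace (Nat.min (S n - 1) (S n) - 1)%nat with (n - 1)%nat by lia.
  pose proof (tech5 (fun i => ct_gam g (S i) * c_gam g (S n - S i)) (n - 1)) as Hlast.
  replace (S (n - 1)) with n in Hlast by lia.
  rewrite Hlast, Nat.sub_diag, c_gam_0.
  assert (Hsum : sum_f_R0 (fun i => ct_gam g (S i) * cp_gam g (S n) (S n - S i)) (n - 1)
               = sum_f_R0 (fun i => ct_gam g (S i) * c_gam g (S n - S i)) (n - 1)).
  { apply sum_eq; intros i Hi. rewrite cp_gam_eq_c_gam by lia. reflexivity. }
  rewrite Hsum. ring.
Qed.

Section Decay.

Variables (g : R) (p : nat) (r : R).
Hypotheses (Hg : 0 < g < 1) (Hp : (2 <= p)%nat) (Hr : 1 - (1 - g) / INR p <= r).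

Lemma c_gam_S_le k : (S k <= p)%nat -> c_gam g (S k) <= r * c_gam g k.
Proof.
  intros Hk. rewrite c_gam_S. pose proof (c_gam_gt0 g k (proj1 Hg)).
  enough ((INR k + g) / INR (S k) <= r) by nra.
  assert (HSk : 0 < INR (S k) <= INR p) by (split; [apply lt_0_INR | apply le_INR]; lia).
  apply Rle_trans with (1 - (1 - g) / INR p); [|exact Hr].
  replace ((INR k + g) / INR (S k)) with (1 - (1 - g) / INR (S k))
    by (rewrite S_INR in *; field; lra).
  apply Rplus_le_compat_l, Ropp_le_contravar. unfold Rdiv.
  apply Rmult_le_compat_l; [lra|]. apply Rinv_le_contravar; lra.
Qed.

Lemma cp_gam_S_le i : cp_gam g p (S i) <= r * cp_gam g p i.
Proof.
  induction i as [i IH] using lt_wf_ind.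
  destruct (Nat.lt_trichotomy (S i) p) as [Hlt|[Heq|Hgt]].
  - rewrite !cp_gam_eq_c_gam by lia. apply c_gam_S_le; lia.
  - rewrite Heq, cp_gam_p, cp_gam_eq_c_gam by lia.
    pose proof (ct_gam_lt0 g p Hg ltac:(lia)).
    pose proof (c_gam_S_le i ltac:(lia)) as Hc. rewrite Heq in Hc. lra.
  - rewrite (cp_gam_rec g p (S i)), (cp_gam_rec g p i) by lia.
    replace (Nat.min (p - 1) (S i) - 1)%nat with (p - 2)%nat by lia.
    replace (Nat.min (p - 1) i - 1)%nat with (p - 2)%nat by lia.
    rewrite <- Ropp_mult_distr_r, scal_sum. apply Ropp_le_contravar, sum_Rle; intros k Hk.
    replace (S i - S k)%nat with (S (i - S k)) by lia.
    pose proof (IH (i - S k)%nat ltac:(lia)).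
    pose proof (ct_gam_lt0 g (S k) Hg ltac:(lia)). nra.
Qed.

Lemma cp_gam_le_geometric j : (p <= j)%nat -> cp_gam g p j <= c_gam g p * r ^ (j - p).
Proof.
  intros Hj. assert (Hr0 : 0 <= r).
  { assert (2 <= INR p) by (apply (le_INR 2); lia).
    assert ((1 - g) / INR p <= 1) by (apply Rmult_le_reg_r with (INR p); [lra|];
      unfold Rdiv; rewrite Rmult_assoc, Rinv_l; lra).
    lra. }
  replace j with (p + (j - p))%nat at 1 by lia.
  induction (j - p)%nat as [|d IH].
  - rewrite Nat.add_0_r, cp_gam_p by lia. pose proof (ct_gam_lt0 g p Hg ltac:(lia)). simpl; lra.
  - replace (p + S d)%nat with (S (p + d)) by lia.
    eapply Rle_trans; [apply cp_gam_S_le|]. simpl.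
    apply Rmult_le_compat_l with (r := r) in IH; [lra|exact Hr0].
Qed.

End Decay.

Lemma exp_quarter_lt : exp (1/4) < 4/3.
Proof.
  pose proof (exp_ineq1 (-(1/4)) ltac:(lra)).
  pose proof (exp_plus (1/4) (-(1/4))) as Hplus.
  replace (1/4 + - (1/4)) with 0 in Hplus by ring. rewrite exp_0 in Hplus.
  pose proof (exp_pos (1/4)). nra.
Qed.

Lemma ln_ratio_ge x : 2 <= x -> 1/4 <= ln (2 * x / (x + 1)).
Proof.
  intros Hx. rewrite <- (ln_exp (1/4)). left. apply ln_increasing; [apply exp_pos|].
  apply Rlt_le_trans with (4/3); [exact exp_quarter_lt|].
  apply Rmult_le_reg_r with (x + 1); [lra|].
  replace (2 * x / (x + 1) * (x + 1)) with (2 * x) by (field; lra). lra.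
Qed.

Lemma Rpower_interp_bounds x g : 0 <= g <= 1 -> 2 <= x ->
  x / 2 <= Rpower x g * Rpower (x - 1) (1 - g) <= x.
Proof.
  intros Hg Hx.
  assert (Hsplit : forall y, 0 < y -> Rpower y g * Rpower y (1 - g) = y).
  { intros y Hy. rewrite <- Rpower_plus. replace (g + (1 - g)) with 1 by ring.
    apply Rpower_1, Hy. }
  assert (Hpos : forall a b, 0 <= Rpower a b) by (intros; left; apply exp_pos).
  split.
  - rewrite <- (Hsplit (x / 2)) at 1 by lra.
    apply Rmult_le_compat; auto; apply Rle_Rpower_l; lra.
  - apply Rle_trans with (Rpower x g * Rpower x (1 - g)); [|rewrite Hsplit; lra].
    apply Rmult_le_compat_l; [auto|]. apply Rle_Rpower_l; lra.
Qed.

Lemma beta_gp_bounds g p : 0 < g < 1 -> (2 <= p)%nat ->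
  (1 - g) / (8 * INR p) <= beta_gp g p <= (1 - g) / (4 * INR p).
Proof.
  intros Hg Hp. assert (HP : 2 <= INR p) by (apply (le_INR 2); lia).
  pose proof (ln_ratio_ge (INR p) HP) as Hln.
  pose proof (Rpower_interp_bounds (INR p) g ltac:(lra) HP) as HX.
  unfold beta_gp. set (P := INR p) in *.
  set (X := Rpower P g * Rpower (P - 1) (1 - g)) in *.
  replace (8 * Rpower P g * Rpower (P - 1) (1 - g)) with (8 * X) by (unfold X; ring).
  split.
  - apply Rmin_glb.
    + replace ((1 - g) / (8 * P)) with ((1 - g) / (2 * P) * (1 / 4)) by (field; lra).
      apply Rmult_le_compat_l; [|exact Hln]. left; apply Rdiv_lt_0_compat; lra.
    + unfold Rdiv. apply Rmult_le_compat_l; [lra|]. apply Rinv_le_contravar; lra.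
  - apply Rle_trans with ((1 - g) / (8 * X)); [apply Rmin_r|].
    unfold Rdiv. apply Rmult_le_compat_l; [lra|]. apply Rinv_le_contravar; lra.
Qed.

Theorem mainTheorem6 (g : R) (p : nat) :
  0 < g < 1 -> (2 <= p)%nat ->
  (forall j : nat, (p <= j)%nat ->
     cp_gam g p j <= c_gam g p * (1 - beta_gp g p) ^ (j - p)) /\
  (1 - g) / (8 * INR p) <= beta_gp g p <= (1 - g) / (4 * INR p).
Proof.
  intros Hg Hp. pose proof (beta_gp_bounds g p Hg Hp) as Hbeta.
  split; [|exact Hbeta].
  intros j Hj. apply cp_gam_le_geometric; [exact Hg|exact Hp| |exact Hj].
  assert (HP : 2 <= INR p) by (apply (le_INR 2); lia).
  assert ((1 - g) / (4 * INR p) <= (1 - g) / INR p).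
  { unfold Rdiv. apply Rmult_le_compat_l; [lra|]. apply Rinv_le_contravar; lra. }
  lra.
Qed.
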